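(* Let $k\ge2$, $n>2^k$, $c=2^k-2$, and assume $d=\gcd(c,n-1)>1$; let $w=(n-1)/d$. Define $y\in\mathbb{R}^V$ by $y_v=0$ if $v=m d$ for some integer $m\ge 0$, and $y_v=\frac{1}{w(d-1)}$ otherwise. Then $y$ is a probability distribution on $V$, $\sum_{v\in C(T)}y_v\le \frac{c}{n-1}$ for every $T\in\mathcal{T}_k$, and $\max_{T\in\mathcal{T}_k}\sum_{v\in C(T)}y_v=\frac{c}{n-1}$. Hence the pair $(x,y)$ is a Nash equilibrium of the search game, where $x$ is the output of the Greedy Algorithm.
   Context: $G$ is the path graph with $V=\{0,\dots,n-1\}$ and edges $\{v,v+1\}$, $0\le v\le n-2$. A search strategy for a tree $H$ is a rooted binary tree defined recursively: a single node is a search strategy for any $H$; otherwise the root is labeled with an edge $uv$ of $H$ and its two child subtrees are search strategies for the components $H_u,H_v$ of $H-uv$ containing $u,v$. Nodes get vertex sets: root gets $V(H)$, children of a root labeled $uv$ get $V(H_u),V(H_v)$, recursively. $C(T)$ (covered set) is the set of $v$ with $V(\lambda)=\{v\}$ for a leaf $\lambda$ of $T$. $\mathcal{T}_k$ is the set of search strategies for $G$ of height (max root-to-leaf edge count) at most $k$. Intervals: $[u\oplus\ell]_r=\{w\bmod r: u\le w\le u+\ell-1\}$, subscript omitted when $r=n$. For $v\in V\setminus\{1\}$, $T_v\in\mathcal{T}_k$ denotes a strategy with $C(T_v)=[v\oplus(c+1)]$ if this interval meets $\{0,n-1\}$ and $C(T_v)=[v\oplus c]$ otherwise (such strategies exist).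 Greedy Algorithm: $v=c+1$, $\mathcal{X}=\{T_0\}$; while $v\notin\{0,1\}$: add $T_v$ to $\mathcal{X}$, set $v=(v+c)\bmod(n-1)$. Output $x$ uniform on $\mathcal{X}$. The search game: the seeker chooses $x\in\Delta_k$ (distribution on $\mathcal{T}_k$), the hider $y\in\Delta_V$ (distribution on $V$); the seeker's payoff (hider's cost) is $\sum_{T}\sum_{v} x_T y_v\,\mathbf 1[v\in C(T)]$. A Nash equilibrium is a pair $(x,y)$ where neither player can improve unilaterally. *)

From HB Require Import structures.
From mathcomp Require Import all_boot all_order all_algebra.
Set Implicit Arguments. Unset Strict Implicit. Unset Printing Implicit Defensive.
Import Order.TTheory GRing.Theory Num.Theory.

(* The path graph G has vertices V = {0,...,n-1} (represented by nats v < n)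
   and edges {v, v+1}, 0 <= v <= n-2.  Every subtree of a path (in particular
   every component arising by deleting edges) is a sub-path, i.e. an interval
   [a, b] of vertices.  A search strategy is a rooted binary tree whose
   internal nodes are labeled by an edge; the label e stands for edge {e,e+1}. *)
Inductive strat : Type :=
  | Leaf : strat
  | Node : nat -> strat -> strat -> strat.

Scheme Equality for strat.

Lemma strat_eqP : Equality.axiom strat_beq.
Proof.
move=> x y; apply: (iffP idP).
- exact: internal_strat_dec_bl.
- exact: internal_strat_dec_lb.
Qed.
HB.instance Definition _ := hasDecEq.Build strat strat_eqP.

(* [valid a b T] : T is a search strategy for the sub-path H with vertex set
   [a, b] = {a, ..., b}: a node labeled e must carry an edge {e, e+1} of H
   (a <= e < b), and its children are strategies for the components
   H_e = [a, e] and H_{e+1} = [e+1, b] of H - {e,e+1}. *)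
Fixpoint valid (a b : nat) (T : strat) : bool :=
  match T with
  | Leaf => true
  | Node e l r => [&& a <= e, e < b, valid a e l & valid e.+1 b r]
  end.

(* Covered set: vertices v such that some leaf has vertex set {v}. *)
Fixpoint cov (a b : nat) (T : strat) : seq nat :=
  match T with
  | Leaf => if a == b then [:: a] else [::]
  | Node e l r => cov a e l ++ cov e.+1 b r
  end.

Fixpoint height (T : strat) : nat :=
  match T with
  | Leaf => 0
  | Node _ l r => (maxn (height l) (height r)).+1
  end.

Definition strategy (n : nat) (T : strat) : bool := valid 0 n.-1 T.

Definition C (n : nat) (T : strat) : seq nat := cov 0 n.-1 T.

Definition inTk (k n : nat) (T : strat) : bool := strategy n T && (height T <= k).

Definition cint (r u l : nat) : seq nat := [seq w %% r | w <- iota u l].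

Definition Tv_spec (k n v : nat) (T : strat) : Prop :=
  let c := (2 ^ k - 2)%N in
  inTk k n T /\
  C n T =i (if has (fun x => (x == 0) || (x == n.-1)) (cint n v c.+1)
            then cint n v c.+1 else cint n v c).

(* The vertices v visited by the while loop of the Greedy Algorithm, starting
   from v = c+1 and stopping as soon as v \in {0,1}; the loop runs at most
   fuel times (fuel = n is enough: the loop stops after (n-1)/gcd(c,n-1) < n
   iterations under the hypotheses of the theorem). *)
Fixpoint greedy_vs (c n fuel v : nat) : seq nat :=
  match fuel with
  | 0 => [::]
  | fuel'.+1 => if (v == 0) || (v == 1) then [::]
                else v :: greedy_vs c n fuel' ((v + c) %% n.-1)
  end.

Definition greedy_set (k n : nat) (Tf : nat -> strat) : seq strat :=
  let c := (2 ^ k - 2)%N in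
  undup (Tf 0 :: [seq Tf v | v <- greedy_vs c n n c.+1]).

Local Open Scope ring_scope.

(* A mixed strategy of the seeker with finite support: a list of
   (probability, strategy) pairs; x \in \Delta_k. *)
Definition seeker_dist (R : realFieldType) (k n : nat) (x : seq (R * strat)) : Prop :=
  (forall p, p \in x -> 0 <= p.1 /\ inTk k n p.2) /\ \sum_(p <- x) p.1 = 1.

Definition hider_dist (R : realFieldType) (n : nat) (y : nat -> R) : Prop :=
  (forall v, (v < n)%N -> 0 <= y v) /\ \sum_(0 <= v < n) y v = 1.

Definition ysum (R : realFieldType) (n : nat) (y : nat -> R) (T : strat) : R :=
  \sum_(0 <= v < n | v \in C n T) y v.

Definition payoff (R : realFieldType) (n : nat) (x : seq (R * strat)) (y : nat -> R) : R :=
  \sum_(p <- x) p.1 * ysum n y p.2.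

Definition greedy_x (R : realFieldType) (k n : nat) (Tf : nat -> strat) : seq (R * strat) :=
  let X := greedy_set k n Tf in
  [seq ((size X)%:R^-1, T) | T <- X].

Definition nash (R : realFieldType) (k n : nat) (x : seq (R * strat)) (y : nat -> R) : Prop :=
  seeker_dist k n x /\ hider_dist n y /\
  (forall x', seeker_dist k n x' -> payoff n x' y <= payoff n x y) /\
  (forall y', hider_dist n y' -> payoff n x y <= payoff n x y').

(* Let d = gcd(c, n-1), c = t d and n-1 = w d.  Along the leaves of a strategy T,
   from left to right, the potential (a - 1) mod d telescopes and shows that T covers at
   most (d-1)(L-1)/d vertices outside dZ, L <= 2^k = t d + 2 being its number of leaves;
   so T gains at most t(d-1) of the w(d-1) equally weighted vertices of y, i.e. c/(n-1),
   and T_0, which covers [0, c], gains exactly that much.  The Greedy Algorithm picks T_0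
   and the T_v with v = (jc+1) mod (n-1), 0 < j < w; read modulo n-1, the j-th of these w
   strategies covers the block [jc+1, jc+c].  The blocks tile t full turns of Z/(n-1), so
   every vertex is covered by at least t strategies of X and the uniform x gains t/w = c/(n-1)
   against every hider.  The two guarantees meet, hence (x, y) is a Nash equilibrium. *)

From mathcomp Require Import all_boot all_order all_algebra.
From mathcomp Require Import zify.
Import Order.TTheory GRing.Theory Num.Theory.
Set Implicit Arguments. Unset Strict Implicit. Unset Printing Implicit Defensive.

Lemma mem_cint r v l x : v < r -> l <= r ->
  (x \in cint r v l) = (x < r) && ((v <= x < v + l) || (x + r < v + l)).
Proof.
move=> hv hl; apply/mapP/idP => [[i]|].
  rewrite mem_iota => /andP[h1 h2] ->.
  have hr : 0 < r by lia.
  have := ltn_pmod i hr; case: (ltnP i r) => hi.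
    by rewrite modn_small //; lia.
  rewrite -(subnK hi) modnDr modn_small; lia.
case/andP=> hx /orP[hvx|hwrap].
  by exists x; rewrite ?modn_small // mem_iota; lia.
by exists (x + r); rewrite ?modnDr ?modn_small // mem_iota; lia.
Qed.

Lemma cint_modn r v l : cint r (v %% r) l = cint r v l.
Proof.
have iota0 u : iota u l = map (addn u) (iota 0 l) by rewrite -iotaDl addn0.
rewrite /cint (iota0 (v %% r)) (iota0 v) -!map_comp.
by apply: eq_map => i /=; rewrite modnDml.
Qed.

Lemma has_pred2 (T : eqType) (a b : T) (s : seq T) :
  has (fun x => (x == a) || (x == b)) s = (a \in s) || (b \in s).
Proof. by rewrite (has_predU (pred1 a) (pred1 b)) !has_pred1. Qed.

Lemma cint_start r v l x : v < r -> 0 < l < r -> x < r ->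
  (x \in cint r v l) && ((x + r.-1) %% r \notin cint r v l) = (x == v).
Proof.
move=> hv hl hx; have hr : 0 < r by lia.
have hpred : (x + r.-1) %% r = if x == 0 then r.-1 else x.-1.
  case: eqP => [->|hx0]; first by rewrite add0n modn_small // prednK.
  have -> : x + r.-1 = x.-1 + r by lia.
  by rewrite modnDr modn_small //; lia.
rewrite hpred !mem_cint; try lia.
case: (x =P 0) => [x0|x0]; lia.
Qed.

Section TvCover.
Variables (k n : nat).
Local Notation c := (2 ^ k - 2).
Hypotheses (c_gt0 : 0 < c) (c_lt_n : c.+2 < n).

Lemma C_Tv_cint v T : Tv_spec k n v T -> v < n ->
  C n T =i cint n v (if (v == 0) || (n.-1 <= v + c) then c.+1 else c).
Proof.
move=> [_ hC] hv u; rewrite hC has_pred2.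
have -> : (0 \in cint n v c.+1) || (n.-1 \in cint n v c.+1) = (v == 0) || (n.-1 <= v + c).
  by rewrite !mem_cint; lia.
by case: ifP.
Qed.

Lemma mem_C_T0 T u : Tv_spec k n 0 T -> (u \in C n T) = (u <= c).
Proof. by move=> hT; rewrite (C_Tv_cint hT) ?mem_cint //=; lia. Qed.

Lemma C_Tv_start v T u : Tv_spec k n v T -> v < n -> u < n ->
  (u \in C n T) && ((u + n.-1) %% n \notin C n T) = (u == v).
Proof. by move=> hT hv hu; rewrite !(C_Tv_cint hT hv) cint_start //; case: ifP; lia. Qed.

Lemma Tv_spec_inj v v' T : Tv_spec k n v T -> Tv_spec k n v' T -> v < n -> v' < n -> v = v'.
Proof.
by move=> hT hT' hv hv'; apply/eqP; rewrite -(C_Tv_start hT' hv' hv) (C_Tv_start hT hv hv).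
Qed.

(* Residues modulo n-1 identify the end vertices 0 and n-1; an interval that wraps
   around through n-1 is given one more vertex and covers both of them. *)
Lemma mem_C_Tv_mod v T u : Tv_spec k n v T -> 0 < v < n.-1 -> u < n ->
  u %% n.-1 \in cint n.-1 v c -> u \in C n T.
Proof.
move=> hT hv hu; have hvn : v < n by lia.
rewrite (C_Tv_cint hT hvn) !mem_cint; try lia; last by case: ifP; lia.
have [hu1|hu1] := ltnP u n.-1; first by rewrite modn_small //; case: ifP; lia.
have -> : u = n.-1 by lia.
by rewrite modnn; case: ifP; lia.
Qed.

End TvCover.

Fixpoint leaves (T : strat) : nat :=
  if T is Node _ l r then leaves l + leaves r else 1.

Lemma leaves_le_exp_height T : leaves T <= 2 ^ height T.
Proof.
elim: T => //= _ l IHl r IHr; rewrite expnS mul2n -addnn.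
by apply: leq_add; [apply: leq_trans IHl _ | apply: leq_trans IHr _];
  rewrite leq_pexp2l // ?leq_maxl ?leq_maxr.
Qed.

Lemma leaf_nonmult_step d a : 0 < d ->
  d * ~~ (d %| a) + (a + d.-1) %% d <= d.-1 + a %% d.
Proof.
move=> d_gt0; rewrite -modnDml /dvdn; have := ltn_pmod a d_gt0.
case: (a %% d =P 0) => [->|ha] ha_lt /=; first by rewrite modn_small; lia.
have -> : a %% d + d.-1 = (a %% d).-1 + d by lia.
by rewrite modnDr modn_small; lia.
Qed.

(* (a + d.-1) %% d is (a - 1) mod d, so the bound telescopes along the leaves of T. *)
Lemma count_cov_nonmult d a b T : 0 < d ->
  d * count (predC (dvdn d)) (cov a b T) + (a + d.-1) %% d
    <= d.-1 * leaves T + b %% d.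
Proof.
move=> d_gt0; elim: T a b => [|e l IHl r IHr] a b /=.
  case: eqP => [<-|_] /=; first by rewrite addn0 muln1; apply: leaf_nonmult_step.
  by rewrite muln0 muln1; have := ltn_pmod (a + d.-1) d_gt0; lia.
have := IHr e.+1 b; rewrite addSnnS prednK // modnDr count_cat.
by have := IHl a e; lia.
Qed.

Lemma count_nonmult_iota d q : 0 < d ->
  count (predC (dvdn d)) (iota 0 (q * d).+1) = q * d.-1.
Proof.
move=> d_gt0; elim: q => [|q IH]; first by rewrite mul0n /= dvdn0.
have -> : (q.+1 * d).+1 = (q * d).+1 + (d.-1 + 1) by rewrite mulSn; lia.
rewrite !iotaD !count_cat IH /= add0n.
have -> : (q * d).+1 + d.-1 = q.+1 * d by rewrite mulSn; lia.
rewrite dvdn_mull //= addn0.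
rewrite (@eq_in_count _ _ predT) ?count_predT ?size_iota; first lia.
move=> x; rewrite mem_iota => hx /=.
have -> : x = q * d + (x - q * d) by lia.
by rewrite dvdn_addr ?dvdn_mull //; apply/negP => /dvdn_leq; lia.
Qed.

(* The blocks [jl+1, jl+l], j < w, tile [1, tM], which meets each residue class modulo M
   exactly t times; since l <= M, the t representatives of x lie in distinct blocks. *)
Lemma count_cint_blocks M l t w x (P : pred nat) : 0 < l <= M -> t * M = w * l ->
  (forall j, j < w -> x %% M \in cint M (j * l).+1 l -> P j) ->
  t <= count P (iota 0 w).
Proof.
move=> /andP[hl0 hlM] htw hP; have hM : 0 < M by lia.
pose r := if x %% M == 0 then M else x %% M.
have [hr hrx] : 0 < r <= M /\ r %% M = x %% M.
  rewrite /r; have := ltn_pmod x hM.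
  by case: eqP => [->|hx]; rewrite ?modnn ?modn_mod; split; lia.
pose j m := (r + m * M).-1 %/ l.
have j_incr : {homo j : m m' / m < m'}.
  move=> m m' hm; rewrite /j leq_divRL // mulSn.
  have := leq_divM (r + m * M).-1 l.
  have : m.+1 * M <= m' * M by rewrite leq_mul2r; lia.
  by rewrite mulSn; lia.
have j_sub : {subset map j (iota 0 t) <= [seq j <- iota 0 w | P j]}.
  move=> i /mapP[m]; rewrite mem_iota add0n => /andP[_ hm] ->.
  have hmt : m.+1 * M <= t * M by rewrite leq_mul2r; lia.
  have hjw : j m < w by rewrite ltn_divLR // -htw; rewrite mulSn in hmt; lia.
  rewrite mem_filter mem_iota leq0n add0n hjw !andbT; apply: hP => //.
  apply/mapP; exists (r + m * M); last by rewrite addnC modnMDl hrx.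
  rewrite mem_iota /j; have := divn_eq (r + m * M).-1 l.
  by have := ltn_pmod (r + m * M).-1 hl0; lia.
have j_uniq : uniq (map j (iota 0 t)).
  exact: sorted_uniq ltn_trans ltnn _ (homo_sorted j_incr _ (iota_ltn_sorted 0 t)).
by have := uniq_leq_size j_uniq j_sub; rewrite size_map size_iota size_filter.
Qed.

Lemma count_mem_le (T : eqType) (a : pred T) (s1 s2 : seq T) : uniq s1 ->
  count (fun x => (x \in s2) && a x) s1 <= count a s2.
Proof.
move=> s1_uniq; rewrite -!size_filter uniq_leq_size ?filter_uniq //.
by move=> x; rewrite !mem_filter => /andP[/andP[-> ->]].
Qed.

Section Payoff.
Variables (R : realFieldType) (k n : nat).
Local Open Scope ring_scope.

Lemma sum_nonmult (d : nat) (b : R) (P : pred nat) s :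
  \sum_(v <- s | P v) (if (d %| v)%N then 0 else b)
    = (count (fun v => P v && ~~ (d %| v)%N) s)%:R * b.
Proof.
rewrite (eq_bigr (fun v => if ~~ (d %| v)%N then b else 0)); last by move=> v _; case: ifP.
by rewrite -big_mkcondr big_const_seq iter_addr_0 mulr_natl.
Qed.

Lemma natr_divMr (F : numFieldType) (a b e : nat) : (0 < e)%N ->
  (a * e)%:R / (b * e)%:R = a%:R / b%:R :> F.
Proof.
by move=> he; rewrite !natrM invfM mulrACA mulfV ?mulr1 // pnatr_eq0 -lt0n.
Qed.

Definition uniform (X : seq strat) : seq (R * strat) := [seq ((size X)%:R^-1, T) | T <- X].

Lemma payoff_le (x : seq (R * strat)) (y : nat -> R) (V : R) :
  seeker_dist k n x -> (forall T, inTk k n T -> ysum n y T <= V) -> payoff n x y <= V.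
Proof.
move=> [x_ge0 x_sum1] hV; rewrite /payoff.
apply: (@le_trans _ _ (\sum_(p <- x) p.1 * V)); last by rewrite -mulr_suml x_sum1 mul1r.
rewrite big_seq [leRHS]big_seq; apply: ler_sum => p /x_ge0[p1_ge0 p2_Tk].
by apply: ler_wpM2l => //; exact: hV.
Qed.

Lemma seeker_dist_uniform X : X != [::] -> all (inTk k n) X -> seeker_dist k n (uniform X).
Proof.
move=> X_neq0 /allP X_Tk; split.
  by move=> _ /mapP[T hT ->]; rewrite invr_ge0 ler0n X_Tk.
rewrite big_map /= big_const_seq count_predT iter_addr_0.
rewrite -(mulr_natr ((size X)%:R^-1)) mulVf //.
by rewrite pnatr_eq0 size_eq0.
Qed.

Lemma payoff_uniform_ge X (y : nat -> R) m : hider_dist n y ->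
  (forall v, (v < n)%N -> (m <= count (fun T => v \in C n T) X)%N) ->
  m%:R / (size X)%:R <= payoff n (uniform X) y.
Proof.
move=> [y_ge0 y_sum1] hcov; rewrite /payoff big_map -mulr_sumr mulrC.
apply: ler_wpM2l; first by rewrite invr_ge0.
under eq_bigr => T _ do rewrite /ysum big_mkcond /=.
rewrite exchange_big /=.
under eq_bigr => v _ do rewrite -big_mkcond /= big_const_seq iter_addr_0.
have -> : m%:R = \sum_(0 <= v < n) m%:R * y v by rewrite -mulr_sumr y_sum1 mulr1.
rewrite big_seq [leRHS]big_seq.
apply: ler_sum => v; rewrite mem_index_iota => /andP[_ hv].
rewrite mulrC -(mulr_natr (y v)); apply: ler_wpM2l; first exact: y_ge0.
by rewrite ler_nat hcov.
Qed.

Lemma nash_of_value x y (V : R) : seeker_dist k n x -> hider_dist n y ->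
  (forall x', seeker_dist k n x' -> payoff n x' y <= V) ->
  (forall y', hider_dist n y' -> V <= payoff n x y') -> nash k n x y.
Proof.
move=> hx hy hup hlow; split=> //; split=> //; split=> [x' hx' | y' hy'].
  exact: le_trans (hup _ hx') (hlow _ hy).
exact: le_trans (hup _ hx) (hlow _ hy').
Qed.

End Payoff.

Lemma coprime_div_gcd m n : 0 < gcdn m n -> coprime (m %/ gcdn m n) (n %/ gcdn m n).
Proof.
move=> g_gt0; rewrite /coprime -(eqn_pmul2r g_gt0) mul1n muln_gcdl.
by rewrite !divnK ?dvdn_gcdl ?dvdn_gcdr.
Qed.

Section Greedy.
Variables (k n d t w : nat) (Tf : nat -> strat).
Local Notation c := (2 ^ k - 2).
Hypotheses (c_gt0 : 0 < c) (c_lt_n : c.+2 < n) (d_gt1 : 1 < d)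
  (c_eq : c = t * d) (n1_eq : n.-1 = w * d) (coprime_tw : coprime t w)
  (Tf_spec : forall v, v < n -> v != 1 -> Tv_spec k n v (Tf v)).

Lemma w_gt0 : 0 < w.
Proof. by move: n1_eq; case: (w) => //=; lia. Qed.

Lemma blocks_tile : t * n.-1 = w * c.
Proof. by rewrite n1_eq c_eq mulnCA. Qed.

(* The vertex v of the j-th strategy T_v added by the Greedy Algorithm: after j - 1 steps
   the loop variable is (jc+1) mod (n-1).  Index 0 stands for T_0, and greedy_vertex w = 1
   ends the loop. *)
Definition greedy_vertex j := if j is 0 then 0 else (j * c).+1 %% n.-1.

Lemma n1_ndvd j : 0 < j < w -> ~~ (n.-1 %| j * c).
Proof.
move=> hj; rewrite n1_eq c_eq mulnA dvdn_pmul2r; last lia.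
rewrite Gauss_dvdl 1?coprime_sym //.
by apply/negP => /dvdn_leq; lia.
Qed.

Lemma greedy_vertex_range j : 0 < j < w -> 1 < greedy_vertex j < n.-1.
Proof.
case: j => [|j] //= hj; rewrite ltn_pmod ?andbT; last lia.
have hd1 : ~~ (d %| (j.+1 * c).+1).
  by rewrite -addn1 dvdn_addr ?dvdn1 ?c_eq ?dvdn_mull //; lia.
have hn1 : ~~ (n.-1 %| j.+1 * c) by apply: n1_ndvd.
case: ((j.+1 * c).+1 %% n.-1 =P 0) => [h0|h0].
  have : d %| (j.+1 * c).+1.
    by apply: dvdn_trans (dvdn_mull w (dvdnn d)) _; rewrite -n1_eq /dvdn h0.
  by rewrite (negbTE hd1).
case: ((j.+1 * c).+1 %% n.-1 =P 1) => [h1|h1]; last lia.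
have : (j.+1 * c).+1 == 1 %[mod n.-1] by rewrite h1 modn_small //; lia.
by rewrite eqn_mod_dvd // subn1 /= (negbTE hn1).
Qed.

Lemma greedy_vertex_spec j : j < w -> Tv_spec k n (greedy_vertex j) (Tf (greedy_vertex j)).
Proof.
case: j => [|j] hj; first by apply: Tf_spec => /=; lia.
by have := @greedy_vertex_range j.+1 hj => hr; apply: Tf_spec; lia.
Qed.

Lemma greedy_vertex_inj : {in gtn w &, injective greedy_vertex}.
Proof.
move=> i j; rewrite !inE => hi hj.
wlog hij : i j hi hj / i < j => [W e|].
  case: (ltngtP i j) => [h|h|//]; first exact: W.
  exact/esym/(W j i hj hi h)/esym.
case: i hi hij => [|i] hi hij e; have := @greedy_vertex_range j; first by rewrite -e /=; lia.
case: j hj hij e => // j hj hij /= e _.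
have : (j.+1 * c).+1 == (i.+1 * c).+1 %[mod n.-1] by rewrite e.
rewrite eqn_mod_dvd; last by rewrite ltnS leq_mul2r; lia.
by rewrite subSS -mulnBl (negbTE (@n1_ndvd (j.+1 - i.+1) _)) //; lia.
Qed.

Lemma greedy_vs_eq : greedy_vs c n n c.+1 = map greedy_vertex (iota 1 w.-1).
Proof.
have hw := w_gt0.
have gv_succ j : 0 < j -> (greedy_vertex j + c) %% n.-1 = greedy_vertex j.+1.
  by case: j => //= j _; rewrite modnDml mulSn addSn addnC.
have gv_w : greedy_vertex w = 1.
  rewrite -(prednK hw) /= prednK // -blocks_tile -addn1 modnMDl.
  by rewrite modn_small //; lia.
suff gvs m j f : 0 < j -> j + m = w -> m <= f ->
    greedy_vs c n f (greedy_vertex j) = map greedy_vertex (iota j m).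
  have -> : c.+1 = greedy_vertex 1 by rewrite /= mul1n modn_small //; lia.
  have hwn : w <= n.-1 by rewrite n1_eq leq_pmulr; lia.
  apply: gvs; lia.
elim: m j f => [|m IH] j f hj hjm hmf.
  by rewrite addn0 in hjm; rewrite hjm gv_w; case: f hmf.
case: f hmf => // f hmf /=.
have := @greedy_vertex_range j; case: ifP; first lia.
by move=> _ _; rewrite gv_succ // IH //; lia.
Qed.

Lemma greedy_vertex_ltn j : j < w -> greedy_vertex j < n.
Proof.
case: j => [|j] hj; first by rewrite /=; lia.
by have := @greedy_vertex_range j.+1 hj; lia.
Qed.

Lemma greedy_strategy_inj : {in gtn w &, injective (Tf \o greedy_vertex)}.
Proof.
move=> i j; rewrite !inE => hi hj /= e.
apply: greedy_vertex_inj; rewrite ?inE //.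
have hsj := greedy_vertex_spec hj; rewrite -e in hsj.
by apply: (Tv_spec_inj c_gt0 c_lt_n (greedy_vertex_spec hi) hsj); apply: greedy_vertex_ltn.
Qed.

Lemma greedy_set_eq : greedy_set k n Tf = map (Tf \o greedy_vertex) (iota 0 w).
Proof.
have iota_w : iota 0 w = 0 :: iota 1 w.-1 by case: (w) w_gt0.
rewrite /greedy_set greedy_vs_eq -map_comp undup_id; first by rewrite iota_w.
rewrite -[_ :: _]/(map (Tf \o greedy_vertex) (0 :: iota 1 w.-1)) -iota_w.
rewrite map_inj_in_uniq ?iota_uniq // => i j; rewrite !mem_iota.
by move=> hi hj; apply: greedy_strategy_inj; rewrite inE; lia.
Qed.

Lemma greedy_cover u : u < n ->
  t <= count (fun j => u \in C n (Tf (greedy_vertex j))) (iota 0 w).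
Proof.
move=> hu.
apply: (count_cint_blocks (M := n.-1) (l := c) (x := u)); [lia | exact: blocks_tile |].
case=> [|j] hj; last first.
  rewrite -cint_modn; apply: (mem_C_Tv_mod c_gt0 c_lt_n (greedy_vertex_spec hj)) => //.
  by have := @greedy_vertex_range j.+1 hj; lia.
rewrite (mem_C_T0 c_gt0 c_lt_n u (greedy_vertex_spec hj)) mem_cint; try lia.
case: (ltnP u n.-1) => hun; first by rewrite modn_small //; lia.
have -> : u = n.-1 by lia.
by rewrite modnn; lia.
Qed.

Lemma count_C_nonmult T : inTk k n T -> count (predC (dvdn d)) (C n T) <= t * d.-1.
Proof.
case/andP => _ hh; have hd0 : 0 < d by lia.
have := count_cov_nonmult 0 n.-1 T hd0.
have -> : n.-1 %% d = 0 by rewrite n1_eq modnMl.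
rewrite add0n modn_small; last lia.
have hL : leaves T <= t * d + 2.
  apply: leq_trans (leaves_le_exp_height T) _.
  by have := leq_pexp2l (isT : 0 < 2) hh; rewrite -c_eq; lia.
rewrite /C; nia.
Qed.

Variable R : realFieldType.
Local Open Scope ring_scope.

Definition hider_y (v : nat) : R := if (d %| v)%N then 0 else (w%:R * (d - 1)%:R)^-1.

Lemma hider_y_ratio : t%:R / w%:R = (t * d.-1)%:R * (w%:R * (d - 1)%:R)^-1 :> R.
Proof. by rewrite -natrM -subn1 natr_divMr //; lia. Qed.

Lemma hider_dist_y : hider_dist n hider_y.
Proof.
split=> [v _|]; first by rewrite /hider_y; case: ifP; rewrite ?invr_ge0 ?mulr_ge0.
have n_eq : n = (w * d).+1 by lia.
rewrite sum_nonmult n_eq /index_iota subn0 (count_nonmult_iota w (ltnW d_gt1)).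
by rewrite subn1 natrM mulfV // mulf_neq0 // pnatr_eq0 -lt0n; lia.
Qed.

Lemma ysum_hider_y_le T : inTk k n T -> ysum n hider_y T <= t%:R / w%:R.
Proof.
move=> hT; rewrite /ysum sum_nonmult hider_y_ratio.
apply: ler_wpM2r; first by rewrite invr_ge0 mulr_ge0.
rewrite ler_nat; apply: leq_trans (count_mem_le _ _ (iota_uniq 0 _)) _.
exact: count_C_nonmult.
Qed.

Lemma ysum_hider_y_T0 : ysum n hider_y (Tf 0) = t%:R / w%:R.
Proof.
have T0_spec : Tv_spec k n 0 (Tf 0) by apply: Tf_spec; lia.
rewrite /ysum (eq_bigl (fun v => true && (v < c.+1)%N)); last first.
  by move=> v; rewrite (mem_C_T0 c_gt0 c_lt_n v T0_spec).
rewrite -big_nat_widen; last lia.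
rewrite sum_nonmult hider_y_ratio {1}c_eq /index_iota subn0.
by rewrite (count_nonmult_iota t (ltnW d_gt1)).
Qed.

Lemma greedy_x_eq : greedy_x R k n Tf = uniform R (map (Tf \o greedy_vertex) (iota 0 w)).
Proof. by rewrite -greedy_set_eq. Qed.

Lemma seeker_dist_greedy : seeker_dist k n (greedy_x R k n Tf).
Proof.
rewrite greedy_x_eq; apply: seeker_dist_uniform.
  by rewrite -size_eq0 size_map size_iota -lt0n w_gt0.
apply/allP => T /mapP[j]; rewrite mem_iota => /andP[_ hj] ->.
by have [] := greedy_vertex_spec hj.
Qed.

Lemma payoff_greedy_ge y : hider_dist n y -> t%:R / w%:R <= payoff n (greedy_x R k n Tf) y.
Proof.
move=> hy; rewrite greedy_x_eq.
have := payoff_uniform_ge (X := map (Tf \o greedy_vertex) (iota 0 w)) (m := t) hy.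
rewrite size_map size_iota; apply=> v hv; rewrite count_map.
exact (greedy_cover hv).
Qed.

Theorem greedy_equilibrium :
  [/\ hider_dist n hider_y,
      (forall T, inTk k n T -> ysum n hider_y T <= t%:R / w%:R),
      (exists2 T, inTk k n T & ysum n hider_y T = t%:R / w%:R)
    & nash k n (greedy_x R k n Tf) hider_y].
Proof.
have T0_Tk : inTk k n (Tf 0) by have [] : Tv_spec k n 0 (Tf 0) by apply: Tf_spec; lia.
split.
- exact: hider_dist_y.
- exact: ysum_hider_y_le.
- by exists (Tf 0); last exact: ysum_hider_y_T0.
- apply: (nash_of_value seeker_dist_greedy hider_dist_y) => [x hx|]; last first.
    exact: payoff_greedy_ge.
  exact: payoff_le hx ysum_hider_y_le.
Qed.

End Greedy.

Local Open Scope ring_scope.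

Theorem theorem3p1 (R : realFieldType) (k n : nat) (Tf : nat -> strat) :
  let c := (2 ^ k - 2)%N in
  let d := gcdn c (n - 1) in
  let w := ((n - 1) %/ d)%N in
  let y : nat -> R := fun v => if (d %| v)%N then 0 else (w%:R * (d - 1)%:R)^-1 in
  (2 <= k)%N -> (2 ^ k < n)%N -> (1 < d)%N ->
  (forall v, (v < n)%N -> v != 1%N -> Tv_spec k n v (Tf v)) ->
  [/\ hider_dist n y,
      (forall T, inTk k n T -> ysum n y T <= c%:R / (n - 1)%:R),
      (exists2 T, inTk k n T & ysum n y T = c%:R / (n - 1)%:R)
    & nash k n (greedy_x R k n Tf) y].
Proof.
move=> c d w y hk hn d_gt1 Tf_spec.
have h4 : (2 ^ 2 <= 2 ^ k)%N by rewrite leq_pexp2l.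
have c_gt0 : (0 < c)%N by rewrite /c; lia.
have c_lt_n : (c.+2 < n)%N by rewrite /c; lia.
pose t := (c %/ d)%N.
have c_eq : c = (t * d)%N by rewrite divnK ?dvdn_gcdl.
have n1_eq : n.-1 = (w * d)%N by rewrite -subn1 divnK ?dvdn_gcdr.
have coprime_tw : coprime t w by rewrite coprime_div_gcd //; lia.
have -> : c%:R / (n - 1)%:R = t%:R / w%:R :> R.
  by rewrite subn1 n1_eq {1}c_eq natr_divMr //; lia.
exact (greedy_equilibrium c_gt0 c_lt_n d_gt1 c_eq n1_eq coprime_tw Tf_spec R).
Qed.
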